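(* For all coprime positive integers $a, b$, the binary word $\mathrm{gen}(a,b)$ has exactly $a+b-1$ distinct subsequences, i.e. $\mathsf{P}(\mathrm{gen}(a,b)) = a+b-1$.
   Context: Words are over the alphabet $\{\mathsf{A},\mathsf{B}\}$; $\mathsf{0}$ denotes the empty word and $\circ$ concatenation. $\mathsf{P}(\mathfrak{s})$ denotes the number of distinct words that are subsequences (not necessarily contiguous) of $\mathfrak{s}$, the empty word included. For coprime integers $a,b\ge 1$ the word $\mathrm{gen}(a,b)$ is defined recursively by: $\mathrm{gen}(1,1)=\mathsf{0}$; $\mathrm{gen}(a,b)=\mathsf{A}\circ\mathrm{gen}(a-b,b)$ if $a>b$; $\mathrm{gen}(a,b)=\mathsf{B}\circ\mathrm{gen}(a,b-a)$ if $b>a$ (this follows the Euclidean algorithm and is well defined). *)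

From HB Require Import structures.
From mathcomp Require Import all_boot.
Set Implicit Arguments. Unset Strict Implicit. Unset Printing Implicit Defensive.

Inductive letter := A | B.

Definition letter_eqb (x y : letter) : bool :=
  match x, y with A, A | B, B => true | _, _ => false end.
Lemma letter_eqP : Equality.axiom letter_eqb.
Proof. by case; case; constructor. Qed.
HB.instance Definition _ := hasDecEq.Build letter letter_eqP.

Definition word := seq letter.

Fixpoint all_masks (n : nat) : seq bitseq :=
  match n with
  | 0 => [:: [::]]
  | n'.+1 => [seq b :: m | b <- [:: false; true], m <- all_masks n']
  end.

(* The distinct subsequences (not necessarily contiguous) of s,
   empty word included: every subsequence of s is mask m s for some mask m
   of length size s; duplicates removed. *)
Definition subseqs (s : word) : seq word :=
  undup [seq mask m s | m <- all_masks (size s)].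

Definition P (s : word) : nat := size (subseqs s).

(* gen(a,b), following the Euclidean algorithm; fuel a+b suffices. *)
Fixpoint gen_fuel (fuel a b : nat) : word :=
  match fuel with
  | 0 => [::]
  | fuel'.+1 =>
      if (a == 1) && (b == 1) then [::]
      else if b < a then A :: gen_fuel fuel' (a - b) b
      else B :: gen_fuel fuel' a (b - a)
  end.

Definition gen (a b : nat) : word := gen_fuel (a + b) a b.

From mathcomp Require Import all_boot.
From mathcomp Require Import zify.

(* A distinct subsequence of x :: t is either empty, or x followed by a
   subsequence of t, or the other letter y followed by a subsequence of the part
   of t after its first y; so P (x :: t) = 1 + P t + P (that part), the last
   term being absent when y does not occur in t.
   For b < a we have gen a b = A :: gen (a - b) b, and the part of gen (a - b) b
   after its first B is gen c (b - c) with c = (a - b) mod b (there is no B when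
   b = 1).  Induction on a + b thus gives P (gen a b) = (a - 1) + 1 + (b - 1).
   The case a < b reduces to this one by exchanging the two letters, which
   turns gen a b into gen b a and does not change P. *)

Lemma drop_index_nseq (T : eqType) k (x y : T) s : x != y ->
  drop (index y (nseq k x ++ y :: s)).+1 (nseq k x ++ y :: s) = s.
Proof. by move=> /negbTE neq_xy; elim: k => /= [|k]; rewrite ?eqxx ?neq_xy ?drop0. Qed.

Lemma subseq_cons_index (T : eqType) (y : T) w t :
  subseq (y :: w) t = (y \in t) && subseq w (drop (index y t).+1 t).
Proof.
elim: t => [//|z t IH] /=; rewrite in_cons eq_sym.
by case: (z == y); rewrite ?drop0.
Qed.

Lemma mem_map_cons (T : eqType) (x : T) (S : seq (seq T)) w :
  (w \in map (cons x) S) = if w is z :: v then (z == x) && (v \in S) else false.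
Proof.
case: w => [|z v]; first by apply/mapP => -[].
by apply/mapP/andP => [[u u_S [-> ->]]|[/eqP -> v_S]]; [rewrite eqxx | exists v].
Qed.

Lemma all_masksP n m : (m \in all_masks n) = (size m == n).
Proof.
elim: n m => [|n IH] [|b m] //=; rewrite !mem_cat !mem_map_cons //.
by rewrite eqSS -IH orbF; case: b => /=; rewrite ?orbF.
Qed.

Lemma subseqsP s w : (w \in subseqs s) = subseq w s.
Proof.
rewrite mem_undup; apply/mapP/subseqP => [[m m_s ->]|[m size_m ->]].
  by exists m => //; apply/eqP; rewrite -all_masksP.
by exists m; rewrite ?all_masksP ?size_m.
Qed.

Lemma P_eq_size s L : uniq L -> (forall w, (w \in L) = subseq w s) -> P s = size L.
Proof.
move=> uniq_L L_s; apply: perm_size; apply: uniq_perm (undup_uniq _) uniq_L _.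
by move=> w; rewrite subseqsP L_s.
Qed.

Lemma P_map_inj (f : letter -> letter) s : injective f -> P (map f s) = P s.
Proof.
move=> inj_f; rewrite /P /subseqs size_map.
have -> : [seq mask m (map f s) | m <- all_masks (size s)] =
          map (map f) [seq mask m s | m <- all_masks (size s)].
  by rewrite -map_comp; apply: eq_map => m; rewrite /= map_mask.
by rewrite undup_map_inj ?size_map //; exact: inj_map.
Qed.

Definition flip (x : letter) : letter := if x is A then B else A.

Lemma flipK : involutive flip. Proof. by case. Qed.

Lemma flip_inj : injective flip. Proof. exact: inv_inj flipK. Qed.

Lemma eq_flip (x z : letter) : (z == flip x) = (z != x).
Proof. by case: x; case: z. Qed.

Lemma P_cons x t : P (x :: t) =
  (P t).+1 + (if flip x \in t then P (drop (index (flip x) t).+1 t) else 0).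
Proof.
set y := flip x; set S := if y \in t then subseqs (drop (index y t).+1 t) else [::].
have -> : (if y \in t then P (drop (index y t).+1 t) else 0) = size S.
  by rewrite /S; case: ifP.
have neq_xy : (x == y) = false by rewrite eq_flip eqxx.
rewrite (@P_eq_size _ ([::] :: map (cons x) (subseqs t) ++ map (cons y) S)).
- by rewrite /= size_cat !size_map.
- have uniq_S : uniq S by rewrite /S; case: ifP => _; rewrite ?undup_uniq.
  have inj_cons (z : letter) : injective (cons z) by move=> u v [].
  rewrite /= mem_cat !mem_map_cons cat_uniq !map_inj_uniq ?undup_uniq ?uniq_S ?andbT //=.
  apply/hasPn => -[|z w]; rewrite !mem_map_cons // => /andP[/eqP -> _].
  by rewrite eq_sym neq_xy.
- case=> [|z w] //=; rewrite in_cons /= mem_cat !mem_map_cons subseqsP.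
  case: eqP => [-> | /eqP neq_zx]; first by rewrite neq_xy orbF.
  have -> : z = y by apply/eqP; rewrite eq_flip.
  by rewrite eqxx subseq_cons_index {}/S; case: ifP => //; rewrite subseqsP.
Qed.

Lemma coprimeBl a b : b <= a -> coprime (a - b) b = coprime a b.
Proof.
by move=> le_ba; rewrite /coprime -[in RHS](subnK le_ba) [in RHS]gcdnC gcdnDr gcdnC.
Qed.

Lemma coprimeBr a b : a <= b -> coprime a (b - a) = coprime a b.
Proof. by move=> le_ab; rewrite /coprime -{2}(subnKC le_ab) gcdnDl. Qed.

Lemma coprimenn_eq1 a : coprime a a -> a = 1.
Proof. by rewrite /coprime gcdnn => /eqP. Qed.

Lemma coprime_modn_gt0 c b : 1 < b -> coprime c b -> 0 < c %% b.
Proof.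
move=> b_gt1 co_cb; rewrite lt0n -/(dvdn b c); apply: contraTN co_cb.
by move=> /gcdn_idPr; rewrite /coprime => ->; rewrite neq_ltn b_gt1 orbT.
Qed.

Lemma gen_fuel_eq n m a b : 0 < a -> 0 < b -> coprime a b ->
  a + b <= n -> a + b <= m -> gen_fuel n a b = gen_fuel m a b.
Proof.
elim: n m a b => [|n IH] [|m] a b a_gt0 b_gt0 co_ab le_n le_m //=; try lia.
case: ifP => // not11; case: (ltngtP a b) => [lt_ab|lt_ba|eq_ab].
- by rewrite (IH m) ?subn_gt0 ?coprimeBr ?(ltnW lt_ab) //; lia.
- by rewrite (IH m) ?subn_gt0 ?coprimeBl ?(ltnW lt_ba) //; lia.
- by move: co_ab not11; rewrite eq_ab => /coprimenn_eq1 ->.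
Qed.

Lemma gen_subl a b : 0 < b -> b < a -> coprime a b -> gen a b = A :: gen (a - b) b.
Proof.
move=> b_gt0 lt_ba co_ab; rewrite /gen -[a + b]prednK ?addn_gt0 ?b_gt0 ?orbT //=.
rewrite ifN; last by apply/nandP; left; rewrite neq_ltn; lia.
by rewrite lt_ba (@gen_fuel_eq _ (a - b + b)) ?subn_gt0 ?coprimeBl ?(ltnW lt_ba) //; lia.
Qed.

Lemma gen_subr a b : 0 < a -> a < b -> coprime a b -> gen a b = B :: gen a (b - a).
Proof.
move=> a_gt0 lt_ab co_ab; rewrite /gen -[a + b]prednK ?addn_gt0 ?a_gt0 //=.
rewrite ifN; last by apply/nandP; right; rewrite neq_ltn; lia.
by rewrite ltnNge (ltnW lt_ab) /= (@gen_fuel_eq _ (a + (b - a)))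
  ?subn_gt0 ?coprimeBr ?(ltnW lt_ab) //; lia.
Qed.

Lemma gen_fuel_flip n a b : 0 < a -> 0 < b -> coprime a b ->
  gen_fuel n b a = map flip (gen_fuel n a b).
Proof.
elim: n a b => [//|n IH] a b a_gt0 b_gt0 co_ab /=; rewrite andbC; case: ifP => // not11.
case: (ltngtP a b) => [lt_ab|lt_ba|eq_ab] /=.
- by rewrite IH ?subn_gt0 ?coprimeBr ?(ltnW lt_ab).
- by rewrite -IH ?subn_gt0 ?coprimeBl ?(ltnW lt_ba).
- by move: co_ab not11; rewrite eq_ab => /coprimenn_eq1 ->.
Qed.

Lemma gen_flip a b : 0 < a -> 0 < b -> coprime a b -> gen b a = map flip (gen a b).
Proof. by move=> a_gt0 b_gt0 co_ab; rewrite /gen addnC gen_fuel_flip. Qed.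

Lemma genn1 c : 0 < c -> gen c 1 = nseq c.-1 A.
Proof.
elim: c => [//|[//|c] IH] _.
by rewrite gen_subl ?coprimen1 // subn1 IH.
Qed.

Lemma gen_first_B c b : 0 < c -> 1 < b -> coprime c b ->
  gen c b = nseq (c %/ b) A ++ B :: gen (c %% b) (b - c %% b).
Proof.
elim/ltn_ind: c => c IH c_gt0 b_gt1 co_cb; have b_gt0 := ltnW b_gt1.
case: (ltngtP c b) => [lt_cb|lt_bc|eq_cb].
- by rewrite divn_small // modn_small // gen_subr.
- have c_eq : c = c - b + 1 * b by rewrite mul1n subnK // ltnW.
  have -> : c %/ b = ((c - b) %/ b).+1 by rewrite [in LHS]c_eq divnDMl // addn1.
  have -> : c %% b = (c - b) %% b by rewrite [in LHS]c_eq mul1n modnDr.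
  by rewrite gen_subl // IH ?subn_gt0 ?coprimeBl ?(ltnW lt_bc) //; lia.
- by move: co_cb b_gt1; rewrite eq_cb => /coprimenn_eq1 ->.
Qed.

Lemma P_cons_A_gen c b : 0 < c -> 0 < b -> coprime c b ->
  P (A :: gen c b) =
  (P (gen c b)).+1 + (if b == 1 then 0 else P (gen (c %% b) (b - c %% b))).
Proof.
move=> c_gt0 b_gt0 co_cb; rewrite P_cons /=.
have [-> | b_neq1] := eqVneq b 1; first by rewrite genn1 // mem_nseq andbF.
have b_gt1 : 1 < b by rewrite ltn_neqAle eq_sym b_neq1.
by rewrite gen_first_B // mem_cat in_cons eqxx orbT drop_index_nseq.
Qed.

Theorem theorem1 (a b : nat) :
  0 < a -> 0 < b -> coprime a b -> P (gen a b) = a + b - 1.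
Proof.
have [n] := ubnP (a + b); elim: n a b => // n IH a b /ltnSE sum_le a_gt0 b_gt0 co_ab.
wlog le_ba : a b a_gt0 b_gt0 co_ab sum_le / b <= a.
  move=> hwlog; case: (leqP b a) => [|/ltnW le_ab]; first exact: hwlog.
  rewrite (@gen_flip b a) 1?coprime_sym // P_map_inj; last exact: flip_inj.
  by rewrite addnC hwlog // 1?addnC // coprime_sym.
case: (ltngtP b a) le_ba => // [lt_ba _|eq_ba _]; last first.
  by move: co_ab; rewrite eq_ba => /coprimenn_eq1 ->.
have co_ab_b : coprime (a - b) b by rewrite coprimeBl // ltnW.
rewrite gen_subl // P_cons_A_gen ?subn_gt0 // IH ?subn_gt0 //; last lia.
case: eqP => [-> | /eqP b_neq1]; first lia.
have b_gt1 : 1 < b by rewrite ltn_neqAle eq_sym b_neq1.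
have mod_gt0 : 0 < (a - b) %% b by exact: coprime_modn_gt0.
have lt_mod : (a - b) %% b < b by rewrite ltn_pmod.
by rewrite IH ?subn_gt0 ?coprimeBr ?coprime_modl ?(ltnW lt_mod) //; lia.
Qed.
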